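(* Let $\mathcal{S}$ be an inverse semigroupoid, $X$ a partially ordered set and $\theta$ an ordered partial action of $\mathcal{S}$ on $X$, and let $(\eta,E,i)$ be given by the globalization construction. Then the relation on $E$ defined by $[s,x]\leqslant[t,y]$ iff there exist $(r,y')\in D$ and $x'\in X$ with $(r,y')\approx(t,y)$, $x'\leqslant y'$ and $(r,x')\approx(s,x)$, is a well-defined partial order on $E$. Moreover, with this order each $E_s$ is an order ideal of $E$ and each $\eta_s$ is order preserving, so that $\eta$ is an ordered global action of $\mathcal{S}$ on $E$.
   Context: Inverse semigroupoid: arrows $\mathcal{S}$, objects $\mathcal{S}^{(0)}$, maps $d,c$, associative multiplication on $\mathcal{S}^{(2)}=\{(s,t):d(s)=c(t)\}$ with $d(st)=d(t)$, $c(st)=c(s)$, and unique $s^*$ with $ss^*s=s$, $s^*ss^*=s^*$; $E(\mathcal{S})$ = idempotents; natural partial order $s\leqslant t$ (for parallel $s,t$) iff $s=te$ for an idempotent $e$ with $(t,e)\in\mathcal{S}^{(2)}$. A partial action of $\mathcal{S}$ on a set $X$ is a pair $(\{X_s\},\{\theta_s\})$ of subsets $X_s\subseteq X$ and maps $\theta_s:X_{s^*}\to X_s$ such that: each $\theta_s$ is a bijection with $\theta_s^{-1}=\theta_{s^*}$ and $X=\bigcup_s X_s$; $\theta_s\circ\theta_t\subseteq\theta_{st}$ as partial maps for $(s,t)\in\mathcal{S}^{(2)}$; $X_s\subseteq X_t$ whenever $s\leqslant t$. It is global if $\theta_s\circ\theta_t=\theta_{st}$ for all $(s,t)\in\mathcal{S}^{(2)}$.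 When $X$ is a poset, it is an ordered partial action if each $X_s$ is an order ideal of $X$ and each $\theta_s$ is an order isomorphism. Globalization construction: let $D=\{(s,x)\in\mathcal{S}\times X: x\in X_{s^*s}\}$. Define $(s,x)\sim(t,y)$ on $D$ iff either (R1) $(t^*,s)\in\mathcal{S}^{(2)}$, $x\in X_{s^*t}$ and $\theta_{t^*s}(x)=y$; or (R2) $s,t\in E(\mathcal{S})$ and $x=y$. Let $\approx$ be the equivalence relation on $D$ generated by $\sim$, $E=D/{\approx}$, and $[s,x]$ the class of $(s,x)$. For $s\in\mathcal{S}$ put $D_s=\{(p,x)\in D:(s^*,p)\in\mathcal{S}^{(2)},\ x\in X_{p^*ss^*p}\}$, $E_s=\{[p,x]:(p,x)\in D_s\}$, and $\eta_s:E_{s^*}\to E_s$, $\eta_s([p,x])=[sp,x]$ for $(p,x)\in D_{s^*}$. Define $i:X\to E$ by $i(x)=[e,x]$ for any $e\in E(\mathcal{S})$ with $x\in X_e$. (These are well defined, $\eta=(\{E_s\},\{\eta_s\})$ is a global action of $\mathcal{S}$ on $E$, and $i$ is injective and equivariant.) *)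

From Stdlib Require Import Relations.

Record invSemigroupoid := InvSemigroupoid {
  arr : Type;
  obj : Type;
  dom : arr -> obj;
  cod : arr -> obj;
  mul : arr -> arr -> arr;         (* meaningful only on S^(2) *)
  star : arr -> arr;
  dom_mul : forall s t, dom s = cod t -> dom (mul s t) = dom t;
  cod_mul : forall s t, dom s = cod t -> cod (mul s t) = cod s;
  mul_assoc : forall s t u, dom s = cod t -> dom t = cod u ->
      mul (mul s t) u = mul s (mul t u);
  dom_star : forall s, dom (star s) = cod s;
  cod_star : forall s, cod (star s) = dom s;
  star_l : forall s, mul (mul s (star s)) s = s;
  star_r : forall s, mul (mul (star s) s) (star s) = star s;
  star_unique : forall s u, dom u = cod s -> cod u = dom s ->
      mul (mul s u) s = s -> mul (mul u s) u = u -> u = star s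
}.

Arguments dom {_} s.
Arguments cod {_} s.
Arguments mul {_} s t.
Arguments star {_} s.

Definition composable {S : invSemigroupoid} (s t : arr S) : Prop := dom s = cod t.

Definition idem {S : invSemigroupoid} (e : arr S) : Prop :=
  composable e e /\ mul e e = e.

Definition natle {S : invSemigroupoid} (s t : arr S) : Prop :=
  dom s = dom t /\ cod s = cod t /\
  exists e, idem e /\ composable t e /\ s = mul t e.

Record ordPartialAction (S : invSemigroupoid) := OrdPartialAction {
  pt : Type;
  le : pt -> pt -> Prop;
  le_refl : forall x, le x x;
  le_antisym : forall x y, le x y -> le y x -> x = y;
  le_trans : forall x y z, le x y -> le y z -> le x z;
  Xs : arr S -> pt -> Prop;
  theta : arr S -> pt -> pt;                (* theta_s : X_{s*} -> X_s *)
  theta_maps : forall s x, Xs (star s) x -> Xs s (theta s x);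
  theta_inv_maps : forall s y, Xs s y -> Xs (star s) (theta (star s) y);
  theta_inv_l : forall s x, Xs (star s) x -> theta (star s) (theta s x) = x;
  theta_inv_r : forall s y, Xs s y -> theta s (theta (star s) y) = y;
  Xs_cover : forall x, exists s, Xs s x;
  theta_comp : forall s t x, composable s t ->
      Xs (star t) x -> Xs (star s) (theta t x) ->
      Xs (star (mul s t)) x /\ theta (mul s t) x = theta s (theta t x);
  Xs_mono : forall s t x, natle s t -> Xs s x -> Xs t x;
  Xs_ideal : forall s x y, Xs s y -> le x y -> Xs s x;
  theta_order : forall s x y, Xs (star s) x -> Xs (star s) y ->
      (le x y <-> le (theta s x) (theta s y))
}.

Arguments pt {_} _.
Arguments le {_ _} x y.
Arguments Xs {_ _} s x.
Arguments theta {_ _} s x.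

(** * Globalization construction (at the level of representatives) *)
Section Glob.
Context {S : invSemigroupoid} (A : ordPartialAction S).

Definition Dg (p : arr S * pt A) : Prop := Xs (mul (star (fst p)) (fst p)) (snd p).

Definition sim (p q : arr S * pt A) : Prop :=
  let (s, x) := p in let (t, y) := q in
  (composable (star t) s /\ Xs (mul (star s) t) x /\ theta (mul (star t) s) x = y)
  \/ (idem s /\ idem t /\ x = y).

Definition simD (p q : arr S * pt A) : Prop := Dg p /\ Dg q /\ sim p q.

Definition approx (p q : arr S * pt A) : Prop :=
  Dg p /\ Dg q /\ clos_refl_sym_trans _ simD p q.

(** D_s; its image in E is E_s *)
Definition Ds (s : arr S) (p : arr S * pt A) : Prop :=
  Dg p /\ composable (star s) (fst p) /\
  Xs (mul (mul (star (fst p)) s) (mul (star s) (fst p))) (snd p).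

(** membership of the class of p in E_s *)
Definition inE (s : arr S) (p : arr S * pt A) : Prop :=
  exists q, Ds s q /\ approx q p.

(** eta_s on representatives in D_{s*} *)
Definition eta (s : arr S) (p : arr S * pt A) : arr S * pt A :=
  (mul s (fst p), snd p).

Definition leE (p q : arr S * pt A) : Prop :=
  exists r y' x', Dg (r, y') /\ approx (r, y') q /\ le x' y' /\ approx (r, x') p.

End Glob.

From Stdlib Require Import Relations.

(* The generated equivalence [≈] on [D] has a direct description:
   [(s,x) ≈ (t,y)] iff either (R1) holds, or [x ∈ X_{s*}], [y ∈ X_{t*}] and
   [θ_s x = θ_t y].  Each elementary step [(s,x) ~ (t,y)] is implemented by an
   order isomorphism between order ideals, so any point below [x] can be carried
   along a chain of steps to a point below [y].  Hence every instance of
   [[s,x] ≤ [t,y]] can be witnessed with [t] itself as the common arrow, and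
   the order axioms reduce to those of [X]: two classes [[t,w]], [[t,y]] with the
   same arrow coincide only if [w = y].  Finally [η_s] multiplies the arrow on
   the left, which preserves [≈] and is undone by [η_{s*}]. *)

Ltac solve_dc := unfold composable, idem in *; rewrite ?dom_star, ?cod_star in *;
  repeat first [ rewrite dom_mul by solve_dc | rewrite cod_mul by solve_dc
               | rewrite dom_star | rewrite cod_star ];
  congruence.

Ltac reassoc := repeat (rewrite mul_assoc by solve_dc).

Section InverseSemigroupoid.
Context {S : invSemigroupoid}.
Implicit Types s t u e f : arr S.

Lemma star_involutive s : star (star s) = s.
Proof.
  symmetry. apply star_unique; rewrite ?dom_star, ?cod_star; auto;
    [apply star_r | apply star_l].
Qed.

Lemma star_idem e : idem e -> star e = e.
Proof. intros [He1 He2]. symmetry. apply star_unique; auto; rewrite !He2; auto. Qed.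

Lemma mul_star_mul s : mul s (mul (star s) s) = s.
Proof. rewrite <- mul_assoc by solve_dc. apply star_l. Qed.

Lemma star_mul_star s : mul (star s) (mul s (star s)) = star s.
Proof. rewrite <- mul_assoc by solve_dc. apply star_r. Qed.

Lemma mul_star_mul_r s t : dom s = cod t ->
  mul s (mul (star s) (mul s t)) = mul s t.
Proof.
  intros. rewrite <- (mul_assoc _ (star s) s t), <- (mul_assoc _ s (mul (star s) s) t)
    by solve_dc.
  now rewrite mul_star_mul.
Qed.

Lemma star_mul_star_r s t : cod s = cod t ->
  mul (star s) (mul s (mul (star s) t)) = mul (star s) t.
Proof.
  intros. rewrite <- (mul_assoc _ s (star s) t), <- (mul_assoc _ (star s) (mul s (star s)) t)
    by solve_dc.
  now rewrite star_mul_star.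
Qed.

Lemma idem_absorb e t : idem e -> dom e = cod t -> mul e (mul e t) = mul e t.
Proof. intros [He1 He2] H. rewrite <- mul_assoc by solve_dc. now rewrite He2. Qed.

Lemma idem_star_l s : idem (mul (star s) s).
Proof.
  split; [unfold composable; solve_dc|]. rewrite <- mul_assoc by solve_dc.
  now rewrite star_r.
Qed.

Lemma idem_star_r s : idem (mul s (star s)).
Proof. pose proof (idem_star_l (star s)) as H. now rewrite star_involutive in H. Qed.

End InverseSemigroupoid.

Ltac solve_idem :=
  first [assumption | apply idem_star_l | apply idem_star_r | solve_dc].

Section Idempotents.
Context {S : invSemigroupoid}.
Implicit Types s t u e f : arr S.

(* [star (e f)] is computed as [f star(e f) e], which is idempotent; [e f] is
   then idempotent as the star of an idempotent. *)
Lemma idem_mul e f : idem e -> idem f -> dom e = dom f -> idem (mul e f).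
Proof.
  intros He Hf Hef. pose proof He as [He1 He2]. pose proof Hf as [Hf1 Hf2].
  unfold composable in *.
  set (x := star (mul e f)).
  assert (H1 : mul (mul (mul e f) x) (mul e f) = mul e f) by apply star_l.
  assert (H2 : mul (mul x (mul e f)) x = x) by apply star_r.
  assert (Dx : dom x = dom e) by (unfold x; solve_dc).
  assert (Cx : cod x = dom e) by (unfold x; solve_dc).
  assert (Hx : mul (mul f x) e = x).
  { unfold x. apply star_unique; try solve_dc; fold x.
    - transitivity (mul (mul (mul e f) x) (mul e f)); [|exact H1].
      reassoc. now rewrite (idem_absorb f), (idem_absorb e) by (auto; solve_dc).
    - transitivity (mul (mul f (mul (mul x (mul e f)) x)) e); [|now rewrite H2].
      reassoc. now rewrite (idem_absorb e), (idem_absorb f) by (auto; solve_dc). }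
  assert (Ix : idem x).
  { split; [unfold composable; congruence|].
    transitivity (mul (mul (mul f x) e) (mul (mul f x) e)); [now rewrite Hx|].
    transitivity (mul (mul f (mul (mul x (mul e f)) x)) e); [reassoc; reflexivity|].
    now rewrite H2. }
  replace (mul e f) with x; [exact Ix|].
  rewrite <- (star_idem x Ix). unfold x. apply star_involutive.
Qed.

Lemma idem_commute e f : idem e -> idem f -> dom e = dom f -> mul e f = mul f e.
Proof.
  intros He Hf Hef.
  pose proof (idem_mul e f He Hf Hef) as Ief.
  pose proof (idem_mul f e Hf He (eq_sym Hef)) as Ife.
  pose proof He as [He1 He2]. pose proof Hf as [Hf1 Hf2]. unfold composable in *.
  rewrite <- (star_idem _ Ief). symmetry. apply star_unique; try solve_dc.
  - transitivity (mul (mul e f) (mul e f)); [|apply Ief].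
    reassoc. now rewrite (idem_absorb f), (idem_absorb e) by (auto; solve_dc).
  - transitivity (mul (mul f e) (mul f e)); [|apply Ife].
    reassoc. now rewrite (idem_absorb e), (idem_absorb f) by (auto; solve_dc).
Qed.

Lemma star_mul s t : dom s = cod t -> star (mul s t) = mul (star t) (star s).
Proof.
  intros H. symmetry. apply star_unique; try solve_dc.
  - transitivity (mul (mul s (mul (mul t (star t)) (mul (star s) s))) t);
      [reassoc; reflexivity|].
    rewrite (idem_commute (mul t (star t))) by solve_idem.
    reassoc. now rewrite mul_star_mul_r, mul_star_mul by solve_dc.
  - transitivity (mul (mul (star t) (mul (mul (star s) s) (mul t (star t)))) (star s));
      [reassoc; reflexivity|].
    rewrite (idem_commute (mul (star s) s)) by solve_idem.
    reassoc. now rewrite star_mul_star_r, star_mul_star by solve_dc.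
Qed.

Lemma natle_star s t : natle s t -> natle (star s) (star t).
Proof.
  intros (D & C & e & Ie & Ce & ->).
  pose proof Ie as [Ie1 Ie2]. unfold composable in *.
  split; [solve_dc|]. split; [solve_dc|].
  exists (mul (mul t e) (star (mul t e))). split; [apply idem_star_r|]. split; [solve_dc|].
  rewrite star_mul, (star_idem e Ie) by solve_dc.
  reassoc. rewrite (idem_absorb e) by (auto; solve_dc).
  symmetry. transitivity (mul (mul e (mul (star t) t)) (star t)).
  - rewrite (idem_commute e (mul (star t) t)) by solve_idem. reassoc. reflexivity.
  - reassoc. now rewrite star_mul_star.
Qed.

Lemma natle_mul_l s t u : dom s = cod u -> natle t u -> natle (mul s t) (mul s u).
Proof.
  intros H (D & C & e & Ie & Ce & ->). unfold composable in *.
  rewrite dom_mul in D by exact Ce. rewrite cod_mul in C by exact Ce.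
  split; [solve_dc|]. split; [solve_dc|].
  exists e. split; auto. split; [solve_dc|]. reassoc. reflexivity.
Qed.

Lemma natle_proj s t : cod s = cod t -> natle (mul t (mul (star t) s)) s.
Proof.
  intros H. split; [solve_dc|]. split; [solve_dc|].
  exists (mul (star s) (mul t (mul (star t) s))). split; [|split; [unfold composable; solve_dc|]].
  - split; [unfold composable; solve_dc|].
    transitivity (mul (star s) (mul (mul (mul t (star t)) (mul s (star s)))
                                    (mul t (mul (star t) s)))); [reassoc; reflexivity|].
    rewrite (idem_commute (mul t (star t))) by solve_idem.
    reassoc. now rewrite star_mul_star_r, mul_star_mul_r by solve_dc.
  - transitivity (mul (mul (mul s (star s)) (mul t (star t))) s); [|reassoc; reflexivity].
    rewrite (idem_commute (mul s (star s))) by solve_idem.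
    reassoc. now rewrite mul_star_mul.
Qed.

Lemma natle_source_idem s t : natle s t ->
  exists e, idem e /\ composable t e /\ s = mul t e /\ natle (mul (star s) s) e.
Proof.
  intros (D & C & e & Ie & Ce & ->). exists e. do 3 (split; auto).
  pose proof Ie as [Ie1 Ie2]. unfold composable in *.
  split; [solve_dc|]. split; [solve_dc|].
  exists (mul (star t) t). split; [apply idem_star_l|]. split; [solve_dc|].
  rewrite star_mul, (star_idem e Ie) by solve_dc.
  transitivity (mul e (mul (mul (star t) t) e)); [reassoc; reflexivity|].
  rewrite <- (idem_commute e (mul (star t) t)) by solve_idem.
  rewrite <- mul_assoc by solve_dc. now rewrite Ie2.
Qed.

End Idempotents.

Section PartialAction.
Context {S : invSemigroupoid} {A : ordPartialAction S}.
Implicit Types s t u e : arr S.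
Implicit Types x y z w : pt A.

Lemma theta_idem e x : idem e -> Xs e x -> theta e x = x.
Proof.
  intros Ie Hx. pose proof (star_idem e Ie) as Se. pose proof Ie as [Ie1 Ie2].
  assert (Hx' : Xs (star e) x) by now rewrite Se.
  assert (Hy : Xs (star e) (theta e x)) by (rewrite Se; apply theta_maps; auto).
  destruct (theta_comp S A e e x Ie1 Hx' Hy) as [_ E]. rewrite Ie2 in E.
  transitivity (theta (star e) (theta e (theta e x))).
  - now rewrite theta_inv_l.
  - rewrite <- E. now apply theta_inv_l.
Qed.

Lemma Xs_range_idem s y : Xs s y -> Xs (mul s (star s)) y.
Proof.
  intros H.
  assert (H1 : Xs (star (star s)) y) by now rewrite star_involutive.
  assert (H2 : Xs (star s) (theta (star s) y)) by (apply theta_inv_maps; auto).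
  destruct (theta_comp S A s (star s) y ltac:(solve_dc) H1 H2) as [H3 _].
  now rewrite star_mul, star_involutive in H3 by solve_dc.
Qed.

Lemma theta_natle s t x : natle s t -> Xs (star s) x ->
  Xs (star t) x /\ theta s x = theta t x.
Proof.
  intros N Hx.
  assert (Ht : Xs (star t) x) by (apply (Xs_mono S A (star s)); auto; apply natle_star; auto).
  split; auto.
  destruct (natle_source_idem s t N) as (e & Ie & Ce & Es & Ne).
  assert (Hss : Xs (mul (star s) s) x).
  { pose proof (Xs_range_idem _ _ Hx) as H. now rewrite star_involutive in H. }
  assert (He : Xs e x) by exact (Xs_mono S A _ _ x Ne Hss).
  assert (He' : Xs (star e) x) by now rewrite star_idem.
  assert (Ht' : Xs (star t) (theta e x)) by (rewrite theta_idem; auto).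
  destruct (theta_comp S A t e x Ce He' Ht') as [_ E].
  now rewrite <- Es, (theta_idem e x) in E.
Qed.

Lemma Xs_star_mul s t x : dom (star t) = cod s ->
  Xs (star (mul (star t) s)) x <-> Xs (mul (star s) t) x.
Proof. intros. rewrite star_mul, star_involutive by solve_dc. tauto. Qed.

Definition rel1 s x t y : Prop :=
  composable (star t) s /\ Xs (mul (star s) t) x /\ theta (mul (star t) s) x = y.

Definition rel_img s x t y : Prop :=
  Xs (star s) x /\ Xs (star t) y /\ theta s x = theta t y.

Definition equivD (p q : arr S * pt A) : Prop :=
  rel1 (fst p) (snd p) (fst q) (snd q) \/ rel_img (fst p) (snd p) (fst q) (snd q).

Lemma rel1_sym s x t y : rel1 s x t y -> rel1 t y s x.
Proof.
  intros (H1 & H2 & H3). unfold composable in *.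
  assert (H2' : Xs (star (mul (star t) s)) x) by (apply Xs_star_mul; auto).
  split; [solve_dc|]. rewrite <- H3. split.
  - now apply theta_maps.
  - pose proof (theta_inv_l S A _ x H2') as E.
    now rewrite star_mul, star_involutive in E by solve_dc.
Qed.

Lemma rel1_trans s x t y u z : rel1 s x t y -> rel1 t y u z -> rel1 s x u z.
Proof.
  intros (H1 & H2 & H3) (K1 & K2 & K3). unfold composable in *.
  assert (X1 : Xs (star (mul (star t) s)) x) by (apply Xs_star_mul; auto).
  assert (X2 : Xs (star (mul (star u) t)) (theta (mul (star t) s) x))
    by (rewrite H3; apply Xs_star_mul; auto).
  destruct (theta_comp S A (mul (star u) t) (mul (star t) s) x ltac:(solve_dc) X1 X2)
    as [Hk Ek].
  assert (N : natle (mul (mul (star u) t) (mul (star t) s)) (mul (star u) s)).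
  { rewrite mul_assoc by solve_dc. apply natle_mul_l; [solve_dc|]. apply natle_proj. solve_dc. }
  destruct (theta_natle _ _ x N Hk) as [Hm Em].
  split; [solve_dc|]. split.
  - now apply Xs_star_mul in Hm; [|solve_dc].
  - now rewrite <- Em, Ek, H3.
Qed.

Lemma rel1_img s x t y : rel1 s x t y -> Xs (star t) y -> rel_img s x t y.
Proof.
  intros (H1 & H2 & H3) Hy. unfold composable in *.
  assert (X1 : Xs (star (mul (star t) s)) x) by (apply Xs_star_mul; auto).
  assert (X2 : Xs (star t) (theta (mul (star t) s) x)) by now rewrite H3.
  destruct (theta_comp S A t (mul (star t) s) x ltac:(solve_dc) X1 X2) as [Hk Ek].
  destruct (theta_natle _ _ x (natle_proj s t ltac:(solve_dc)) Hk) as [Hm Em].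
  split; auto. split; auto. now rewrite <- Em, Ek, H3.
Qed.

Lemma img_rel1 t x u y : cod t = cod u -> rel_img t x u y -> rel1 t x u y.
Proof.
  intros C (H1 & H2 & H3).
  assert (K : Xs (star (star u)) (theta t x))
    by (rewrite star_involutive, H3; apply theta_maps; auto).
  destruct (theta_comp S A (star u) t x ltac:(solve_dc) H1 K) as [L E].
  split; [solve_dc|]. split.
  - apply Xs_star_mul; auto. solve_dc.
  - rewrite E, H3. apply theta_inv_l; auto.
Qed.

Lemma equivD_sym p q : equivD p q -> equivD q p.
Proof.
  destruct p as [s x], q as [t y]. unfold equivD; simpl.
  intros [H|(H1 & H2 & H3)]; [left; now apply rel1_sym | right; repeat split; auto].
Qed.

Lemma equivD_trans p q r : equivD p q -> equivD q r -> equivD p r.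
Proof.
  destruct p as [s x], q as [t y], r as [u z]. unfold equivD; simpl.
  intros [H|H] [K|K].
  - left. eapply rel1_trans; eauto.
  - destruct K as (K1 & K2 & K3). destruct (rel1_img _ _ _ _ H K1) as (L1 & _ & L2).
    right. repeat split; auto. congruence.
  - destruct H as (H1 & H2 & H3). destruct (rel1_img _ _ _ _ (rel1_sym _ _ _ _ K) H2)
      as (L1 & _ & L2).
    right. repeat split; auto. congruence.
  - destruct H as (H1 & H2 & H3), K as (K1 & K2 & K3). right. repeat split; auto. congruence.
Qed.

End PartialAction.

Section Globalization.
Context {S : invSemigroupoid} {A : ordPartialAction S}.
Implicit Types s t u r : arr S.
Implicit Types x y z w : pt A.
Implicit Types p q : arr S * pt A.

Notation crst := (clos_refl_sym_trans _ (simD A)).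

Lemma Dg_ideal r y w : Dg A (r, y) -> le w y -> Dg A (r, w).
Proof. unfold Dg; simpl. intros. eapply Xs_ideal; eauto. Qed.

Lemma equivD_refl p : Dg A p -> equivD p p.
Proof.
  destruct p as [s x]. unfold Dg, equivD, rel1; simpl. intros H. left.
  split; [solve_dc|]. split; auto. apply theta_idem; auto. apply idem_star_l.
Qed.

Lemma sim_equivD p q : Dg A p -> Dg A q -> sim A p q -> equivD p q.
Proof.
  destruct p as [s x], q as [t y]. unfold Dg, sim, equivD, rel_img; simpl.
  intros Hp Hq [H|(Is & It & ->)]; [left; exact H|right].
  rewrite (star_idem s Is), (star_idem t It) in *.
  rewrite (proj2 Is) in Hp. rewrite (proj2 It) in Hq.
  repeat split; auto. now rewrite (theta_idem s y), (theta_idem t y).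
Qed.

Lemma approx_equivD p q : approx A p q -> equivD p q.
Proof.
  intros (Hp & Hq & H).
  assert (p = q \/ equivD p q) as [<-|]; [|now apply equivD_refl|auto].
  clear Hp Hq.
  induction H as [p q Hs | p | p q _ IH | p q o _ IH1 _ IH2].
  - destruct Hs as (Hp & Hq & Hs). right. now apply sim_equivD.
  - now left.
  - destruct IH as [->|]; [now left | right; now apply equivD_sym].
  - destruct IH1 as [->|]; destruct IH2 as [->|]; auto.
    right. eapply equivD_trans; eauto.
Qed.

(* Through [(ss*, θ_s x)], (R2) links any two points with a common [θ]-image. *)
Lemma simD_range s x : Dg A (s, x) -> Xs (star s) x ->
  simD A (s, x) (mul s (star s), theta s x).
Proof.
  intros Hp Hx. pose proof (star_idem _ (idem_star_r s)) as E.
  split; auto. split.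
  - unfold Dg; simpl. rewrite E. destruct (idem_star_r s) as [_ ->].
    apply Xs_range_idem, theta_maps. auto.
  - unfold sim. left. rewrite E. split; [solve_dc|]. split.
    + now rewrite star_mul_star.
    + now rewrite star_l.
Qed.

Lemma equivD_approx p q : Dg A p -> Dg A q -> equivD p q -> approx A p q.
Proof.
  intros Hp Hq H. split; auto. split; auto.
  destruct p as [s x], q as [t y]. unfold equivD, rel_img in H; simpl in H.
  destruct H as [H|(H1 & H2 & H3)].
  - apply rst_step. split; auto. split; auto. now left.
  - pose proof (simD_range s x Hp H1) as K1. pose proof (simD_range t y Hq H2) as K2.
    eapply rst_trans; [apply rst_step; exact K1|].
    eapply rst_trans; [|apply rst_sym, rst_step; exact K2].
    apply rst_step. destruct K1 as (_ & K1 & _), K2 as (_ & K2 & _).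
    split; auto. split; auto. right. repeat split; auto; apply idem_star_r.
Qed.

Lemma approx_refl p : Dg A p -> approx A p p.
Proof. intros. repeat split; auto. apply rst_refl. Qed.

Lemma approx_sym p q : approx A p q -> approx A q p.
Proof. intros (? & ? & ?). repeat split; auto. now apply rst_sym. Qed.

Lemma approx_trans p q (o : arr S * pt A) : approx A p q -> approx A q o -> approx A p o.
Proof. intros (? & ? & ?) (? & ? & ?). repeat split; auto. eapply rst_trans; eauto. Qed.

Lemma approx_same_arrow r x y : approx A (r, x) (r, y) -> x = y.
Proof.
  intros H. pose proof (proj1 H) as Hx. apply approx_equivD in H. unfold Dg, equivD, rel1, rel_img in *; simpl in *.
  destruct H as [(H1 & H2 & H3)|(H1 & H2 & H3)].
  - rewrite <- H3. symmetry. apply theta_idem; auto. apply idem_star_l.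
  - rewrite <- (theta_inv_l S A r x H1), <- (theta_inv_l S A r y H2). now f_equal.
Qed.

(* Both cases of [sim] are given by order isomorphisms between order ideals
   ([θ_{t*s}] resp. the identity), so they can be restricted below a point. *)
Lemma simD_lower_l r t y z w : simD A (r, y) (t, z) -> le w y ->
  exists w', le w' z /\ simD A (r, w) (t, w').
Proof.
  intros (Hp & Hq & H) Hw. unfold sim in H.
  destruct H as [(H1 & H2 & H3)|(Ir & It & ->)].
  - assert (Hw2 : Xs (mul (star r) t) w) by (eapply Xs_ideal; eauto).
    assert (Hle : le (theta (mul (star t) r) w) z).
    { rewrite <- H3. apply theta_order; try apply Xs_star_mul; auto. }
    exists (theta (mul (star t) r) w). split; auto.
    split; [eapply Dg_ideal; eauto|]. split; [eapply Dg_ideal; eauto|].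
    left. auto.
  - exists w. split; auto. split; [eapply Dg_ideal; eauto|].
    split; [eapply Dg_ideal; eauto|]. right. auto.
Qed.

Lemma simD_lower_r r t y z w : simD A (t, z) (r, y) -> le w y ->
  exists w', le w' z /\ simD A (t, w') (r, w).
Proof.
  intros (Hq & Hp & H) Hw. unfold sim in H.
  destruct H as [(H1 & H2 & H3)|(It & Ir & ->)].
  - assert (Hy : Xs (mul (star r) t) y).
    { rewrite <- H3. apply theta_maps, Xs_star_mul; auto. }
    assert (Hw2 : Xs (mul (star r) t) w) by (eapply Xs_ideal; eauto).
    set (w' := theta (star (mul (star r) t)) w).
    assert (Hw' : Xs (star (mul (star r) t)) w') by (apply theta_inv_maps; auto).
    assert (Ew' : theta (mul (star r) t) w' = w) by (apply theta_inv_r; auto).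
    assert (Hle : le w' z).
    { apply (theta_order S A (mul (star r) t)); auto.
      - now apply Xs_star_mul.
      - congruence. }
    exists w'. split; auto.
    split; [eapply Dg_ideal; eauto|]. split; [eapply Dg_ideal; eauto|].
    left. split; auto. split; auto. apply Xs_star_mul; auto.
  - exists w. split; auto. split; [eapply Dg_ideal; eauto|].
    split; [eapply Dg_ideal; eauto|]. right. auto.
Qed.

Lemma crst_lower p q : crst p q -> forall w, le w (snd p) ->
  exists w', le w' (snd q) /\ crst (fst p, w) (fst q, w').
Proof.
  intros H. apply clos_rst_rst1n in H.
  induction H as [p | [r y] [t z] q Hs _ IH]; intros w Hw.
  - exists w. split; auto. apply rst_refl.
  - assert (exists w1, le w1 z /\ crst (r, w) (t, w1)) as (w1 & Hw1 & C1).
    { destruct Hs as [Hs|Hs].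
      - destruct (simD_lower_l r t y z w Hs Hw) as (w1 & ? & ?).
        exists w1. split; auto. now apply rst_step.
      - destruct (simD_lower_r r t y z w Hs Hw) as (w1 & ? & ?).
        exists w1. split; auto. now apply rst_sym, rst_step. }
    destruct (IH w1 Hw1) as (w2 & Hw2 & C2). exists w2. split; auto.
    eapply rst_trans; eauto.
Qed.

Lemma approx_lower r t y z w : approx A (r, y) (t, z) -> le w y ->
  exists w', le w' z /\ approx A (r, w) (t, w').
Proof.
  intros (Dy & Dz & C) Hw.
  destruct (crst_lower _ _ C w Hw) as (w' & Hw' & C'). simpl in *.
  exists w'. split; auto. repeat split; auto; eapply Dg_ideal; eauto.
Qed.

End Globalization.

Section Order.
Context {S : invSemigroupoid} {A : ordPartialAction S}.
Implicit Types s t u r : arr S.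
Implicit Types x y z w : pt A.
Implicit Types p q : arr S * pt A.

Lemma leE_intro r y x p q : approx A (r, y) q -> le x y -> approx A (r, x) p -> leE A p q.
Proof. intros Hy Hxy Hx. exists r, y, x. split; [apply Hy | auto]. Qed.

Lemma leE_at p q t z : leE A p q -> approx A (t, z) q ->
  exists w, le w z /\ approx A (t, w) p.
Proof.
  intros (r & y & x & _ & Hy & Hxy & Hx) Hz.
  destruct (approx_lower r t y z x (approx_trans _ _ _ Hy (approx_sym _ _ Hz)) Hxy)
    as (w & Hwz & Hw).
  exists w. split; auto. eapply approx_trans; [apply approx_sym|]; eauto.
Qed.

Lemma leE_approx p p' q q' : approx A p p' -> approx A q q' -> leE A p q -> leE A p' q'.
Proof.
  intros Hp Hq (r & y & x & _ & Hy & Hxy & Hx).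
  apply leE_intro with r y x; auto; eapply approx_trans; eauto.
Qed.

Lemma leE_refl p : Dg A p -> leE A p p.
Proof.
  destruct p as [s x]. intros H. apply leE_intro with s x x; auto using approx_refl, le_refl.
Qed.

Lemma leE_trans p q o : leE A p q -> leE A q o -> leE A p o.
Proof.
  intros Hpq (r & y & x & _ & Hy & Hxy & Hx).
  destruct (leE_at p q r x Hpq Hx) as (w & Hwx & Hw).
  apply leE_intro with r y w; auto. eapply le_trans; eauto.
Qed.

Lemma leE_antisym p q : leE A p q -> leE A q p -> approx A p q.
Proof.
  intros Hpq (r & y & x & _ & Hy & Hxy & Hx).
  destruct (leE_at p q r x Hpq Hx) as (w & Hwx & Hw).
  assert (w = y) as ->
    by exact (approx_same_arrow r w y (approx_trans _ _ _ Hw (approx_sym _ _ Hy))).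
  assert (x = y) as -> by (apply le_antisym; auto).
  eapply approx_trans; [apply approx_sym|]; eauto.
Qed.

Lemma Ds_ideal s t z w : Ds A s (t, z) -> le w z -> Ds A s (t, w).
Proof.
  intros (D & C & X) Hw. split; [eapply Dg_ideal; eauto|].
  split; auto. simpl in *. eapply Xs_ideal; eauto.
Qed.

Lemma leE_inE s p q : leE A p q -> inE A s q -> inE A s p.
Proof.
  intros Hpq ([t z] & Hz & Hzq).
  destruct (leE_at p q t z Hpq Hzq) as (w & Hwz & Hw).
  exists (t, w). split; auto. eapply Ds_ideal; eauto.
Qed.

Lemma Ds_star_Dg s t x : Ds A (star s) (t, x) -> dom s = cod t /\ Dg A (mul s t, x).
Proof.
  unfold Ds, Dg; simpl. intros (_ & H1 & H2). rewrite star_involutive in *.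
  unfold composable in H1. split; auto. now rewrite star_mul by solve_dc.
Qed.

Lemma equivD_mul_l s t u x y : dom s = cod t -> dom s = cod u -> Dg A (mul s u, y) ->
  equivD (t, x) (u, y) -> equivD (mul s t, x) (mul s u, y).
Proof.
  intros Ct Cu Hy Htu.
  assert (H : rel1 t x u y).
  { destruct Htu as [H|H]; simpl in H; auto. apply img_rel1; auto. congruence. }
  destruct H as (H1 & H2 & H3). left. simpl. unfold Dg in Hy; simpl in Hy.
  set (k := mul (star (mul s u)) (mul s u)).
  assert (X1 : Xs (star (mul (star u) t)) x) by (apply Xs_star_mul; auto).
  assert (X2 : Xs (star k) (theta (mul (star u) t) x))
    by (rewrite H3; unfold k; rewrite (star_idem _ (idem_star_l _)); auto).
  destruct (theta_comp S A k (mul (star u) t) x ltac:(unfold k; solve_dc) X1 X2) as [Hk Ek].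
  (* [s*s] and [uu*] commute, so the idempotent [k] is absorbed into [(su)*(st)]. *)
  assert (Ek' : mul k (mul (star u) t) = mul (star (mul s u)) (mul s t)).
  { unfold k. rewrite !star_mul by solve_dc.
    transitivity (mul (star u) (mul (mul (mul (star s) s) (mul u (star u))) t));
      [reassoc; reflexivity|].
    rewrite (idem_commute (mul (star s) s)) by solve_idem.
    reassoc. now rewrite star_mul_star_r by solve_dc. }
  rewrite Ek' in Hk, Ek.
  split; [solve_dc|]. split.
  - now apply Xs_star_mul in Hk; [|solve_dc].
  - rewrite Ek, H3. apply theta_idem; auto. apply idem_star_l.
Qed.

Lemma approx_eta s p q : Ds A (star s) p -> Ds A (star s) q ->
  approx A p q -> approx A (eta A s p) (eta A s q).
Proof.
  destruct p as [t x], q as [u y]. intros Hp Hq Hpq.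
  destruct (Ds_star_Dg s t x Hp) as [Ct Dt], (Ds_star_Dg s u y Hq) as [Cu Du].
  apply equivD_approx; auto. apply equivD_mul_l; auto. now apply approx_equivD.
Qed.

Lemma Ds_eta s p : Ds A (star s) p -> Ds A s (eta A s p).
Proof.
  destruct p as [t x]. intros Hp. destruct (Ds_star_Dg s t x Hp) as [C D].
  split; auto. unfold eta; simpl. split; [solve_dc|].
  assert (E : mul (mul (star (mul s t)) s) (mul (star s) (mul s t))
              = mul (star (mul s t)) (mul s t)).
  { rewrite star_mul by solve_dc. reassoc. now rewrite star_mul_star_r by solve_dc. }
  now rewrite E.
Qed.

Lemma approx_eta_back s t x : Ds A (star s) (t, x) ->
  approx A (t, x) (mul (star s) (mul s t), x).
Proof.
  intros Hp. destruct (Ds_star_Dg s t x Hp) as [C D]. unfold Dg in D; simpl in D.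
  assert (E1 : mul (star t) (mul (star s) (mul s t)) = mul (star (mul s t)) (mul s t))
    by (rewrite star_mul by solve_dc; reassoc; reflexivity).
  assert (E2 : mul (star (mul (star s) (mul s t))) (mul (star s) (mul s t))
               = mul (star (mul s t)) (mul s t)).
  { rewrite !star_mul, star_involutive by solve_dc. reassoc.
    now rewrite star_mul_star_r by solve_dc. }
  assert (E3 : mul (star (mul (star s) (mul s t))) t = mul (star (mul s t)) (mul s t)).
  { rewrite !star_mul, star_involutive by solve_dc. reassoc. reflexivity. }
  apply equivD_approx; [apply Hp | unfold Dg; simpl; now rewrite E2 |].
  left. simpl. split; [solve_dc|]. rewrite E1, E3. split; auto.
  apply theta_idem; auto. apply idem_star_l.
Qed.

Lemma approx_eta_inv s p q : Ds A (star s) p -> Ds A (star s) q ->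
  approx A (eta A s p) (eta A s q) -> approx A p q.
Proof.
  destruct p as [t x], q as [u y]. intros Hp Hq Hpq.
  assert (H : approx A (eta A (star s) (eta A s (t, x))) (eta A (star s) (eta A s (u, y)))).
  { apply approx_eta; auto; rewrite star_involutive; now apply Ds_eta. }
  eapply approx_trans; [apply approx_eta_back; exact Hp|].
  eapply approx_trans; [exact H|]. apply approx_sym, approx_eta_back, Hq.
Qed.

Lemma leE_eta s p q : Ds A (star s) p -> Ds A (star s) q ->
  leE A p q -> leE A (eta A s p) (eta A s q).
Proof.
  destruct q as [u y]. intros Hp Hq Hpq.
  destruct (leE_at p (u, y) u y Hpq (approx_refl _ (proj1 Hq))) as (w & Hwy & Hw).
  apply leE_intro with (mul s u) y w; auto.
  - apply approx_refl. apply (Ds_star_Dg s u y Hq).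
  - apply (approx_eta s (u, w) p); auto. eapply Ds_ideal; eauto.
Qed.

Lemma leE_eta_inv s p q : Ds A (star s) p -> Ds A (star s) q ->
  leE A (eta A s p) (eta A s q) -> leE A p q.
Proof.
  destruct q as [u y]. intros Hp Hq Hpq.
  destruct (leE_at _ _ (mul s u) y Hpq (approx_refl _ (proj2 (Ds_star_Dg s u y Hq))))
    as (w & Hwy & Hw).
  apply leE_intro with u y w; auto. apply approx_refl, Hq.
  apply (approx_eta_inv s (u, w) p); auto. eapply Ds_ideal; eauto.
Qed.

End Order.

Theorem mainTheorem5 (S : invSemigroupoid) (A : ordPartialAction S) :
  (forall p p' q q', approx A p p' -> approx A q q' ->
      leE A p q -> leE A p' q') /\
  (forall p, Dg A p -> leE A p p) /\
  (forall p q r, leE A p q -> leE A q r -> leE A p r) /\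
  (forall p q, leE A p q -> leE A q p -> approx A p q) /\
  (forall s p q, Dg A p -> leE A p q -> inE A s q -> inE A s p) /\
  (forall s p q, Ds A (star s) p -> Ds A (star s) q ->
      leE A p q -> leE A (eta A s p) (eta A s q)) /\
  (forall s p q, Ds A (star s) p -> Ds A (star s) q ->
      leE A (eta A s p) (eta A s q) -> leE A p q).
Proof.
  split; [exact leE_approx|].
  split; [exact leE_refl|].
  split; [exact leE_trans|].
  split; [exact leE_antisym|].
  split; [intros s p q _; apply leE_inE|].
  split; [exact leE_eta | exact leE_eta_inv].
Qed.
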